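(* Let $R$ be a DT ring. Then the factor ring $R/J(R)$ is reduced (has no nonzero nilpotent elements).
   Context: All rings are associative with identity; $J(R)$ is the Jacobson radical, $U(R)$ the group of units. $\Delta(R)=\{x\in R: x+u\in U(R)\text{ for all }u\in U(R)\}$. $\mathrm{Tr}(R)=\{x\in R: x^3=x\}$. A ring $R$ is a DT ring if every $r\in R$ can be written $r=e+d$ with $e\in\mathrm{Tr}(R)$ and $d\in\Delta(R)$. *)

From mathcomp Require Import all_boot all_algebra.
Set Implicit Arguments. Unset Strict Implicit. Unset Printing Implicit Defensive.
Import GRing.Theory.
Local Open Scope ring_scope.

Definition in_Delta (R : unitRingType) (x : R) : Prop :=
  forall u : R, u \is a GRing.unit -> (x + u) \is a GRing.unit.

Definition tripotent (R : unitRingType) (x : R) : Prop := x ^+ 3 = x.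

Definition DT_ring (R : unitRingType) : Prop :=
  forall r : R, exists e d : R, [/\ tripotent e, in_Delta d & r = e + d].

(* Jacobson radical J(R), elementwise: x in J(R) iff 1 - r x is a unit
   for every r in R (equivalently, x lies in every maximal left ideal). *)
Definition in_Jacobson (R : unitRingType) (x : R) : Prop :=
  forall r : R, (1 - r * x) \is a GRing.unit.

From mathcomp Require Import all_boot all_algebra.

(* For d in Delta(R) and r = e + d' (e tripotent, d' in Delta(R)) one has
   1 - r d = (1 - e d)(1 - d'' d) with d'' in Delta(R), and 1 - d'' d is a unit
   since Delta(R) is closed under multiplication by units and 1 + Delta(R)
   consists of units.  For 1 - e d, write e = f v with
   f = e^2 idempotent and v = e + 1 - f an involution; then 1 - e d is a unit
   iff 1 - f (v d) f is, and f - f (v d) f is invertible in the corner ring fRf.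
   Hence Delta(R) is contained in J(R), so every element is a tripotent modulo
   J(R), and a tripotent e with e^2 in J(R) lies in J(R) since e = e e^2. *)

Set Implicit Arguments. Unset Strict Implicit. Unset Printing Implicit Defensive.
Import GRing.Theory.
Local Open Scope ring_scope.

Section DeltaJacobson.
Variable R : unitRingType.
Implicit Types a b d e f u w x y : R.

Lemma unitr_sub1_mulC a b :
  (1 - a * b) \is a GRing.unit -> (1 - b * a) \is a GRing.unit.
Proof.
move=> /unitrP [X [XK KX]]; apply/unitrP; exists (1 + b * X * a); split.
- rewrite mulrDl mul1r.
  have -> : b * X * a * (1 - b * a) = b * a.
    rewrite -mulrA mulrBr mulr1 mulrA -{1}[a]mul1r -mulrBl.
    by rewrite mulrA -(mulrA b) XK mulr1.
  exact: subrK.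
- rewrite mulrDr mulr1.
  have -> : (1 - b * a) * (b * X * a) = b * a.
    rewrite mulrBl mul1r -!mulrA -mulrBr (mulrA a) -{1}[X * a]mul1r -mulrBl.
    by rewrite (mulrA (1 - a * b)) KX mul1r.
  exact: subrK.
Qed.

Lemma unitr_add1_sqr0 x : x * x = 0 -> (1 + x) \is a GRing.unit.
Proof.
move=> xx0; apply/unitrP; exists (1 - x); split.
- by rewrite mulrBl mul1r mulrDr mulr1 xx0 addr0 addrK.
- by rewrite mulrDl mul1r mulrBr mulr1 xx0 subr0 subrK.
Qed.

Lemma DeltaN d : in_Delta d -> in_Delta (- d).
Proof. by move=> Dd u Uu; rewrite -unitrN opprD opprK Dd ?unitrN. Qed.

Lemma DeltaMr d u : in_Delta d -> u \is a GRing.unit -> in_Delta (d * u).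
Proof.
move=> Dd Uu w Uw.
have -> : d * u + w = (d + w / u) * u by rewrite mulrDl divrK.
by rewrite unitrMl // Dd // unitrMl // unitrV.
Qed.

Lemma DeltaMl u d : in_Delta d -> u \is a GRing.unit -> in_Delta (u * d).
Proof.
move=> Dd Uu w Uw.
have -> : u * d + w = u * (d + u^-1 * w) by rewrite mulrDr mulVKr.
by rewrite unitrMr // Dd // unitrMr // unitrV.
Qed.

Lemma Delta_add1_unit d : in_Delta d -> (1 + d) \is a GRing.unit.
Proof. by move=> Dd; rewrite addrC Dd ?unitr1. Qed.

Lemma Delta_sub1_mul_unit d1 d2 :
  in_Delta d1 -> in_Delta d2 -> (1 - d1 * d2) \is a GRing.unit.
Proof.
move=> D1 D2.
have -> : 1 - d1 * d2 = - (d1 * (1 + d2)) + (1 + d1).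
  by rewrite mulrDr mulr1 opprD [RHS]addrC addrA addrK.
by apply: DeltaN; [apply: DeltaMr | ]; rewrite ?Delta_add1_unit.
Qed.

Lemma idempotent_corner_unit f u w a :
  f * f = f -> u \is a GRing.unit -> w \is a GRing.unit ->
  u * f = a -> f * w = a -> (1 - f + a) \is a GRing.unit.
Proof.
move=> ff Uu Uw uf fw.
(* a has a left and a right inverse in the corner ring fRf; they coincide. *)
have fa : f * a = a by rewrite -fw mulrA ff.
have af : a * f = a by rewrite -uf -mulrA ff.
pose b := f * u^-1 * f.
have fb : f * b = b by rewrite /b !mulrA ff.
have bf : b * f = b by rewrite /b -mulrA ff.
have ba : b * a = f by rewrite /b -mulrA fa -uf -mulrA mulKr.
have ab : a * b = f.
  have ab' : a * (f * w^-1 * f) = f by rewrite !mulrA af -fw mulrK.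
  suff -> : b = f * w^-1 * f by [].
  by rewrite -[LHS]bf -{1}ab' mulrA ba !mulrA ff.
set g := 1 - f.
have gf : g * f = 0 by rewrite /g mulrBl mul1r ff subrr.
have fg : f * g = 0 by rewrite /g mulrBr mulr1 ff subrr.
have gg : g * g = g by rewrite {1}/g mulrBl mul1r fg subr0.
have ga : g * a = 0 by rewrite -fa mulrA gf mul0r.
have ag : a * g = 0 by rewrite -af -mulrA fg mulr0.
have gb : g * b = 0 by rewrite -fb mulrA gf mul0r.
have bg : b * g = 0 by rewrite -bf -mulrA fg mulr0.
have gDf : g + f = 1 by rewrite /g subrK.
clearbody g; apply/unitrP; exists (g + b).
by rewrite !mulrDl !mulrDr gg ga ag gb bg ab ba !addr0 add0r gDf.
Qed.

Lemma Delta_idempotent_corner_unit f d :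
  f * f = f -> in_Delta d -> (1 - f * d * f) \is a GRing.unit.
Proof.
move=> ff Dd.
have fg : f * (1 - f) = 0 by rewrite mulrBr mulr1 ff subrr.
have gf : (1 - f) * f = 0 by rewrite mulrBl mul1r ff subrr.
(* 1 + n - d is a unit for square-zero n; n = (1-f)df and n = fd(1-f) give
   units u, w with u f = f w = f - fdf. *)
have Dunit x : x * x = 0 -> (1 + x - d) \is a GRing.unit.
  by move=> xx0; rewrite -unitrN opprB Dd // unitrN unitr_add1_sqr0.
have -> : 1 - f * d * f = 1 - f + (f - f * d * f) by rewrite addrA subrK.
apply: (@idempotent_corner_unit f (1 + (1 - f) * d * f - d) (1 + f * d * (1 - f) - d))
  => //.
- apply: Dunit.
  by rewrite -!mulrA (mulrA f (1 - f)) fg mul0r !mulr0.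
- apply: Dunit.
  by rewrite -!mulrA (mulrA (1 - f) f) gf mul0r !mulr0.
- by rewrite mulrBl mulrDl mul1r -!mulrA ff mulrBl mul1r addrA addrAC addrK.
- by rewrite mulrBr mulrDr mulr1 !mulrA ff mulrBr mulr1 addrA addrAC addrK.
Qed.

Lemma Delta_idempotent_sub1_mul_unit f d :
  f * f = f -> in_Delta d -> (1 - f * d) \is a GRing.unit.
Proof.
move=> ff Dd; have := Delta_idempotent_corner_unit ff Dd.
by move/unitr_sub1_mulC; rewrite mulrA ff.
Qed.

Lemma Delta_tripotent_sub1_mul_unit e d :
  tripotent e -> in_Delta d -> (1 - e * d) \is a GRing.unit.
Proof.
move=> e3 Dd; have eee : e * (e * e) = e by rewrite -[RHS]e3 !exprS expr0 mulr1.
pose f := e * e; pose v := e + (1 - f).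
have ff : f * f = f by rewrite /f mulrA -(mulrA e e e) eee.
have fe : f * e = e by rewrite /f -mulrA eee.
have vv : v * v = 1.
  rewrite /v mulrDl !mulrDr !mulrN !mulr1 !mulrBl !mul1r eee fe ff !subrr.
  by rewrite subr0 add0r !addr0 addrC subrK.
have Uv : v \is a GRing.unit by apply/unitrP; exists v.
have -> : e = f * v by rewrite /v mulrDr mulrBr mulr1 fe ff subrr addr0.
by rewrite -mulrA Delta_idempotent_sub1_mul_unit //; apply: DeltaMl.
Qed.

Lemma Delta_subset_Jacobson (hDT : DT_ring R) d : in_Delta d -> in_Jacobson d.
Proof.
move=> Dd r; have [e [d' [e3 Dd' ->]]] := hDT r.
have Ued := Delta_tripotent_sub1_mul_unit e3 Dd.
have -> : 1 - (e + d') * d = (1 - e * d) * (1 - ((1 - e * d)^-1 * d') * d).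
  by rewrite mulrBr mulr1 !mulrA divrr // mul1r mulrDl opprD addrA.
by rewrite unitrMr // Delta_sub1_mul_unit //; apply: DeltaMl; rewrite ?unitrV.
Qed.

Lemma JacobsonD x y : in_Jacobson x -> in_Jacobson y -> in_Jacobson (x + y).
Proof.
move=> Jx Jy r; have Ux := Jx r.
have -> : 1 - r * (x + y) = (1 - r * x) * (1 - ((1 - r * x)^-1 * r) * y).
  by rewrite mulrBr mulr1 !mulrA divrr // mul1r mulrDr opprD addrA.
by rewrite unitrMr.
Qed.

Lemma JacobsonMl a x : in_Jacobson x -> in_Jacobson (a * x).
Proof. by move=> Jx r; rewrite mulrA. Qed.

Lemma JacobsonMr x a : in_Jacobson x -> in_Jacobson (x * a).
Proof. by move=> Jx r; rewrite mulrA unitr_sub1_mulC // mulrA. Qed.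

Lemma JacobsonB x y : in_Jacobson x -> in_Jacobson y -> in_Jacobson (x - y).
Proof. by move=> Jx Jy; rewrite -mulN1r; apply/JacobsonD/JacobsonMl. Qed.

Lemma Jacobson_sqr (hDT : DT_ring R) x : in_Jacobson (x * x) -> in_Jacobson x.
Proof.
move=> Jxx; have [e [d [e3 Dd xE]]] := hDT x.
have Jd := Delta_subset_Jacobson hDT Dd.
have Jee : in_Jacobson (e * e).
  have eE : e = x - d by rewrite xE addrK.
  have -> : e * e = x * x - x * d - d * e by rewrite [in LHS]eE mulrBl {1}eE mulrBr.
  by apply: JacobsonB; [apply: JacobsonB => //; apply: JacobsonMl | apply: JacobsonMr].
by rewrite xE; apply: JacobsonD => //; rewrite -e3 exprS expr2; apply: JacobsonMl.
Qed.

End DeltaJacobson.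

Theorem lemma4p2 (R : unitRingType) (hDT : DT_ring R) :
  forall (x : R) (n : nat), in_Jacobson (x ^+ n) -> in_Jacobson x.
Proof.
move=> x; elim=> [|n IHn] Jxn.
  by have := Jxn 1; rewrite expr0 mulr1 subrr unitr0.
case: n IHn Jxn => [|n] IHn Jxn; first by rewrite expr1 in Jxn.
apply/IHn/(Jacobson_sqr hDT).
by rewrite -exprD addSnnS exprD; apply: JacobsonMl.
Qed.
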